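(* For any $\theta=(B,\Omega)$ and $\psi_i=(m_i,s_i)$, $\big[\nabla_{\mathrm{vec}(B)\psi_i}J_i(\nabla_{\psi_i\psi_i}J_i)^{-1}\nabla_{\psi_i\mathrm{vec}(B)}J_i\big](\theta,\psi_i)=-(D_{\tilde a_i}^{1/2}E_iD_{\tilde a_i}^{1/2})\otimes x_ix_i^\top$, where $E_i=G_i+(I_p-G_i)C_i(I_p-G_i)$, $G_i=D_{s_i}\Lambda_iD_{s_i}$, $\Lambda_i=\big(I_p+D_{s_i}^2(D_{\tilde a_i}+D_{\tilde a_i}D_{s_i}^2+\Omega_D)\big)^{-1}D_{\tilde a_i}D_{s_i}^2$ and $C_i=\big(I_p+D_{\tilde a_i}^{-1/2}\Omega D_{\tilde a_i}^{-1/2}-D_{s_i}\Lambda_iD_{s_i}\big)^{-1}$.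
   Context: PLN model, observation $i$ with counts $Y_i\in\mathbb N^p$, covariate $x_i\in\mathbb R^m$, offset $o_i\in\mathbb R^p$; $B\in\mathcal M_{m,p}(\mathbb R)$ (columns $B_j$), $\Omega$ symmetric positive definite. Variational parameter $\psi_i=(m_i,s_i)\in\mathbb R^p\times(0,\infty)^p$. Single-observation ELBO: $J_i(\theta,\psi_i)=Y_i^\top(o_i+m_i+B^\top x_i)-\tilde a_i^\top1_p-\sum_j\log(Y_{ij}!)+\frac12\log|\Omega|-\frac12m_i^\top\Omega m_i-\frac12\mathrm{diag}(\Omega)^\top s_i^2+\sum_j\log s_{ij}+\frac p2$, $\tilde a_{ij}=\exp(o_{ij}+x_i^\top B_j+m_{ij}+s_{ij}^2/2)$. $\mathrm{vec}(B)$ stacks the columns of $B$. Notation: $D_v=\mathrm{Diag}(v)$, $\Omega_D=I_p\odot\Omega$, $\otimes$ Kronecker product. *)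

From HB Require Import structures.
From mathcomp Require Import all_boot all_order all_algebra.
From mathcomp Require Import all_classical all_reals all_analysis.
From mathcomp.real_closed Require Import mxtens.

Set Implicit Arguments.
Unset Strict Implicit.
Unset Printing Implicit Defensive.

Import Order.TTheory GRing.Theory Num.Theory.
Import numFieldNormedType.Exports.
Local Open Scope ring_scope.

Section PLN.
Variables (R : realType) (p m : nat).

(* \tilde a_{ij} = exp(o_ij + x_i^T B_j + m_ij + s_ij^2/2);
   x : 'rV_m (row vector x_i^T), o, mu, s : 'rV_p, B : 'M_(m,p). *)
Definition atil (x : 'rV[R]_m) (o : 'rV[R]_p) (B : 'M[R]_(m, p))
  (mu s : 'rV[R]_p) : 'rV[R]_p :=
  \row_j expR (o 0 j + (x *m B) 0 j + mu 0 j + s 0 j ^+ 2 / 2).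

Definition ELBO (Y : 'I_p -> nat) (x : 'rV[R]_m) (o : 'rV[R]_p)
  (B : 'M[R]_(m, p)) (Om : 'M[R]_p) (mu s : 'rV[R]_p) : R :=
  \sum_j (Y j)%:R * (o 0 j + mu 0 j + (x *m B) 0 j)
  - \sum_j atil x o B mu s 0 j
  - \sum_j ln ((Y j)`!)%:R
  + 2^-1 * ln (\det Om)
  - 2^-1 * (mu *m Om *m mu^T) 0 0
  - 2^-1 * \sum_j Om j j * s 0 j ^+ 2
  + \sum_j ln (s 0 j)
  + p%:R / 2.

Definition ELBOpsi Y x o Om (B : 'M[R]_(m, p)) (psi : 'rV[R]_(p + p)) : R :=
  ELBO Y x o B Om (lsubmx psi) (rsubmx psi).

Definition epsi (a : 'I_(p + p)) : 'rV[R]_(p + p) := delta_mx 0 a.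

(* direction in B-space corresponding to coordinate a of vec(B)
   (vec stacks the columns B_j; coordinate (j,k) <-> B k j, index j*m+k,
   the same index convention as the Kronecker product tensmx) *)
Definition eB (a : 'I_(p * m)) : 'M[R]_(m, p) :=
  delta_mx (mxtens_unindex a).2 (mxtens_unindex a).1.

Definition Hpsipsi Y x o Om B psi : 'M[R]_(p + p) :=
  \matrix_(a, b) 'D_(epsi a) (fun q => 'D_(epsi b) (ELBOpsi Y x o Om B) q) psi.

Definition HBpsi Y x o Om B psi : 'M[R]_(p * m, p + p) :=
  \matrix_(a, b)
    'D_(eB a) (fun B' => 'D_(epsi b) (ELBOpsi Y x o Om B') psi) B.

Definition HpsiB Y x o Om B psi : 'M[R]_(p + p, p * m) :=
  \matrix_(b, a)
    'D_(epsi b) (fun q => 'D_(eB a) (fun B' => ELBOpsi Y x o Om B' q) B) psi.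

Definition Dg (v : 'rV[R]_p) : 'M[R]_p := diag_mx v.
Definition Dsqrt (v : 'rV[R]_p) : 'M[R]_p := diag_mx (map_mx Num.sqrt v).
Definition Dinvsqrt (v : 'rV[R]_p) : 'M[R]_p :=
  diag_mx (map_mx (fun t => (Num.sqrt t)^-1) v).
Definition OmD (Om : 'M[R]_p) : 'M[R]_p := diag_mx (\row_j Om j j).

Definition Lambda (a s : 'rV[R]_p) (Om : 'M[R]_p) : 'M[R]_p :=
  invmx (1%:M + (Dg s *m Dg s) *m (Dg a + Dg a *m (Dg s *m Dg s) + OmD Om))
  *m Dg a *m (Dg s *m Dg s).
Definition Gmx a s Om : 'M[R]_p := Dg s *m Lambda a s Om *m Dg s.
Definition Cmx a s Om : 'M[R]_p :=
  invmx (1%:M + Dinvsqrt a *m Om *m Dinvsqrt a - Dg s *m Lambda a s Om *m Dg s).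
Definition Emx a s Om : 'M[R]_p :=
  Gmx a s Om + (1%:M - Gmx a s Om) *m Cmx a s Om *m (1%:M - Gmx a s Om).

End PLN.

From HB Require Import structures.
From mathcomp Require Import all_boot all_order all_algebra.
From mathcomp Require Import all_classical all_reals all_analysis.
From mathcomp.real_closed Require Import mxtens.
From mathcomp Require Import ring lra.

(* Write a = ã_i. The psi-Hessian of J_i is -M with
   M = [[D_a + Ω, D_(a s)], [D_(a s), D_h]],  h_j = a_j + a_j s_j^2 + Ω_jj + s_j^-2,
   and the mixed Hessian is -(I_p ⊗ x_i^T) W with W = [D_a, D_(a s)].
   Eliminating the diagonal s-block of M leaves the Schur complement S = D_c + Ω,
   where c_j = a_j (1 - g_j) and g_j = s_j^2 a_j / h_j is the diagonal of G_i;
   hence W M^-1 W^T = D_(a g) + D_c S^-1 D_c.  As C_i = D_a^(1/2) S^-1 D_a^(1/2),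
   this is D_a^(1/2) E_i D_a^(1/2), and (I_p ⊗ x_i^T) Z (I_p ⊗ x_i) = Z ⊗ x_i x_i^T. *)

Set Implicit Arguments.
Unset Strict Implicit.
Unset Printing Implicit Defensive.

Import Order.TTheory GRing.Theory Num.Theory.
Import numFieldNormedType.Exports.
Local Open Scope ring_scope.

Section DirectionalDerivative.
Variable R : realType.

Lemma deriveE_line (V W : normedModType R) (f : V -> W) x v :
  'D_v f x = 'D_1 (fun h : R => f (h *: v + x)) 0.
Proof.
rewrite /derive; set g1 := fun h => h^-1 *: _; set g2 := fun h => h^-1 *: _.
suff -> : g1 = g2 by [].
by rewrite funeqE /g1 /g2 => h /=; rewrite addr0 scale0r add0r [_%:A]mulr1.
Qed.

Lemma is_derive_comp_scalar (V : normedModType R) (f : R -> R) (g : V -> R)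
    x v df dg :
  is_derive (g x) 1 f df -> is_derive x v g dg ->
  is_derive x v (fun y => f (g y)) (df * dg).
Proof.
move=> fdf [gv gdg].
have gline : is_derive (0 : R) 1 (fun h : R => g (h *: v + x)) dg.
  by split; [apply/(derivable1P g x v) | rewrite -deriveE_line].
have fdf0 : is_derive ((fun h : R => g (h *: v + x)) 0) 1 f df.
  by rewrite /= scale0r add0r.
have [fgv fgdg] := is_derive1_comp fdf0 gline.
by split; [apply/(derivable1P (fun y => f (g y)) x v) | rewrite deriveE_line].
Qed.

End DirectionalDerivative.

Section MatrixCoordinate.
Variables (R : realType) (m n : nat) (i : 'I_m) (j : 'I_n).

Definition mxcoord (N : 'M[R]_(m, n)) : R := N i j.

Fact mxcoord_linear : linear mxcoord.
Proof. by move=> k A B; rewrite /mxcoord !mxE. Qed.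

HB.instance Definition _ :=
  GRing.isLinear.Build R 'M[R]_(m, n) R *:%R mxcoord mxcoord_linear.

Lemma is_derive_coord (x v : 'M[R]_(m, n)) :
  is_derive x v (fun N : 'M[R]_(m, n) => N i j) (v i j).
Proof.
change (is_derive x v mxcoord (v i j)).
have mxcoord_diff : differentiable mxcoord x.
  exact/linear_differentiable/coord_continuous.
split; first exact: diff_derivable.
by rewrite deriveE // diff_lin //; exact: coord_continuous.
Qed.

End MatrixCoordinate.

(* Pointwise forms of the library rules, which are stated for [f + g], [f * g], ...
   in the function ring and so do not unify with [fun y => f y + g y]. *)
Section PointwiseDerivative.
Variables (R : realType) (V : normedModType R).
Implicit Types (f g : V -> R) (x v : V).

Lemma is_derive_add f g x v df dg : is_derive x v f df -> is_derive x v g dg ->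
  is_derive x v (fun y => f y + g y) (df + dg).
Proof. exact: is_deriveD. Qed.

Lemma is_derive_sub f g x v df dg : is_derive x v f df -> is_derive x v g dg ->
  is_derive x v (fun y => f y - g y) (df - dg).
Proof. exact: is_deriveB. Qed.

Lemma is_derive_opp f x v df : is_derive x v f df ->
  is_derive x v (fun y => - f y) (- df).
Proof. exact: is_deriveN. Qed.

Lemma is_derive_mul f g x v df dg : is_derive x v f df -> is_derive x v g dg ->
  is_derive x v (fun y => f y * g y) (f x * dg + g x * df).
Proof. exact: is_deriveM. Qed.

Lemma is_derive_exprn f n x v df : is_derive x v f df ->
  is_derive x v (fun y => f y ^+ n) ((n%:R * f x ^+ n.-1) * df).
Proof.
move=> fdf; have := is_deriveX n fdf.
by rewrite (_ : f ^+ n = fun y => f y ^+ n) // funeqE => y; rewrite exprfctE.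
Qed.

Lemma is_derive_const (c : R) x v : is_derive x v (fun _ : V => c) 0.
Proof. exact: is_derive_cst. Qed.

Lemma is_derive_bigsum n (h : 'I_n -> V -> R) x v (dh : 'I_n -> R) :
  (forall i, is_derive x v (h i) (dh i)) ->
  is_derive x v (fun y => \sum_(i < n) h i y) (\sum_(i < n) dh i).
Proof.
move=> hdh; have := is_derive_sum hdh.
by rewrite (_ : \sum_(i < n) h i = fun y => \sum_(i < n) h i y) // funeqE => y;
  rewrite fct_sumE.
Qed.

Lemma is_derive_inv f x v df : f x != 0 -> is_derive x v f df ->
  is_derive x v (fun y => (f y)^-1) (- (f x) ^- 2 * df).
Proof.
move=> fx0 [fv fdf]; split; first exact: derivableV.
by rewrite deriveV // fdf.
Qed.

Lemma is_derive_expRf f x v df : is_derive x v f df ->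
  is_derive x v (fun y => expR (f y)) (expR (f x) * df).
Proof. exact: is_derive_comp_scalar. Qed.

Lemma is_derive_lnf f x v df : 0 < f x -> is_derive x v f df ->
  is_derive x v (fun y => ln (f y)) ((f x)^-1 * df).
Proof. by move=> fx0; apply: is_derive_comp_scalar; exact: is_derive1_ln. Qed.

End PointwiseDerivative.

Section BlockCoordinates.
Variables (R : realType) (n k : nat) (A : 'M[R]_n).
Implicit Types q v w : 'rV[R]_(n + k).

Lemma is_derive_lsub_coord q v j :
  is_derive q v (fun q : 'rV[R]_(n + k) => lsubmx q 0 j) (lsubmx v 0 j).
Proof.
rewrite mxE; have := is_derive_coord 0 (lshift k j) q v.
by rewrite (_ : (fun N : 'rV_(n + k) => N 0 (lshift k j)) = (fun q => lsubmx q 0 j))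
  // funeqE => y; rewrite mxE.
Qed.

Lemma is_derive_rsub_coord q v j :
  is_derive q v (fun q : 'rV[R]_(n + k) => rsubmx q 0 j) (rsubmx v 0 j).
Proof.
rewrite mxE; have := is_derive_coord 0 (rshift n j) q v.
by rewrite (_ : (fun N : 'rV_(n + k) => N 0 (rshift n j)) = (fun q => rsubmx q 0 j))
  // funeqE => y; rewrite mxE.
Qed.

Lemma is_derive_quad_form q v :
  is_derive q v (fun q : 'rV[R]_(n + k) => (lsubmx q *m A *m (lsubmx q)^T) 0 0)
    ((lsubmx v *m A *m (lsubmx q)^T) 0 0 + (lsubmx q *m A *m (lsubmx v)^T) 0 0).
Proof.
rewrite (_ : (fun q : 'rV[R]_(n + k) => _) =
  (fun q => \sum_l (\sum_i lsubmx q 0 i * A i l) * lsubmx q 0 l)); last first.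
  rewrite funeqE => y; rewrite !mxE; apply: eq_bigr => l _; rewrite !mxE.
  by congr (_ * _); apply: eq_bigr => i _; rewrite mxE.
apply: is_derive_eq.
  apply: is_derive_bigsum => l; apply: is_derive_mul; last exact: is_derive_lsub_coord.
  by apply: is_derive_bigsum => i;
    exact: (is_derive_mul (is_derive_lsub_coord _ _ _) (is_derive_const _ _ _)).
rewrite !mxE -big_split /=; apply: eq_bigr => l _; rewrite !mxE addrC; congr (_ + _).
by rewrite mulr_sumr mulr_suml; apply: eq_bigr => i _; rewrite !mxE mulr0 add0r; ring.
Qed.

Lemma is_derive_bilin_r q w v :
  is_derive q w (fun q : 'rV[R]_(n + k) => (lsubmx v *m A *m (lsubmx q)^T) 0 0)
    ((lsubmx v *m A *m (lsubmx w)^T) 0 0).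
Proof.
rewrite (_ : (fun q : 'rV[R]_(n + k) => _) =
  (fun q => \sum_l (\sum_i lsubmx v 0 i * A i l) * lsubmx q 0 l)); last first.
  by rewrite funeqE => y; rewrite !mxE; apply: eq_bigr => l _; rewrite !mxE.
apply: is_derive_eq.
  by apply: is_derive_bigsum => l;
    exact: (is_derive_mul (is_derive_const _ _ _) (is_derive_lsub_coord _ _ _)).
by rewrite !mxE; apply: eq_bigr => l _; rewrite !mxE; ring.
Qed.

Lemma is_derive_bilin_l q w v :
  is_derive q w (fun q : 'rV[R]_(n + k) => (lsubmx q *m A *m (lsubmx v)^T) 0 0)
    ((lsubmx w *m A *m (lsubmx v)^T) 0 0).
Proof.
rewrite (_ : (fun q : 'rV[R]_(n + k) => _) =
  (fun q => \sum_l (\sum_i lsubmx q 0 i * A i l) * lsubmx v 0 l)); last first.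
  rewrite funeqE => y; rewrite !mxE; apply: eq_bigr => l _; rewrite !mxE.
  by congr (_ * _); apply: eq_bigr => i _; rewrite mxE.
apply: is_derive_eq.
  apply: is_derive_bigsum => l; apply: (is_derive_mul _ (is_derive_const _ _ _)).
  by apply: is_derive_bigsum => i;
    exact: (is_derive_mul (is_derive_lsub_coord _ _ _) (is_derive_const _ _ _)).
rewrite !mxE; apply: eq_bigr => l _; rewrite !mxE mulr0 add0r mulrC !mulr_suml.
by apply: eq_bigr => i _; rewrite !mxE; ring.
Qed.

End BlockCoordinates.

Lemma is_derive_mulmx_coord (R : realType) m p (x : 'rV[R]_m) (B U : 'M[R]_(m, p)) j :
  is_derive B U (fun B : 'M[R]_(m, p) => (x *m B) 0 j) ((x *m U) 0 j).
Proof.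
rewrite mxE (_ : (fun B : 'M[R]_(m, p) => (x *m B) 0 j) =
  (fun B => \sum_k x 0 k * B k j)); last by rewrite funeqE => y; rewrite mxE.
apply: is_derive_bigsum => k; apply: is_derive_eq.
  exact: (is_derive_mul (is_derive_const (x 0 k) B U) (is_derive_coord k j B U)).
by rewrite mulr0 addr0.
Qed.

Section ELBODerivatives.
Variables (R : realType) (p m : nat) (Y : 'I_p -> nat) (x : 'rV[R]_m)
  (o : 'rV[R]_p) (Om : 'M[R]_p).
Implicit Types (B U : 'M[R]_(m, p)) (q v w : 'rV[R]_(p + p)).

Definition intensity B q j :=
  expR (o 0 j + (x *m B) 0 j + lsubmx q 0 j + rsubmx q 0 j ^+ 2 / 2).

Lemma ELBOpsiE B q : ELBOpsi Y x o Om B q =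
  \sum_j (Y j)%:R * (o 0 j + lsubmx q 0 j + (x *m B) 0 j)
  - \sum_j intensity B q j
  - \sum_j ln ((Y j)`!)%:R
  + 2^-1 * ln (\det Om)
  - 2^-1 * (lsubmx q *m Om *m (lsubmx q)^T) 0 0
  - 2^-1 * \sum_j Om j j * rsubmx q 0 j ^+ 2
  + \sum_j ln (rsubmx q 0 j)
  + p%:R / 2.
Proof.
rewrite /ELBOpsi /ELBO; congr (_ - _ - _ + _ - _ - _ + _ + _).
by apply: eq_bigr => j _; rewrite mxE.
Qed.

Definition grad_psi B v q : R :=
  \sum_j (Y j)%:R * lsubmx v 0 j
  - \sum_j intensity B q j * (lsubmx v 0 j + rsubmx q 0 j * rsubmx v 0 j)
  - 2^-1 * ((lsubmx v *m Om *m (lsubmx q)^T) 0 0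
            + (lsubmx q *m Om *m (lsubmx v)^T) 0 0)
  - \sum_j Om j j * (rsubmx q 0 j * rsubmx v 0 j)
  + \sum_j (rsubmx q 0 j)^-1 * rsubmx v 0 j.

Definition hess_psi B v w q : R :=
  - \sum_j (intensity B q j * (lsubmx w 0 j + rsubmx q 0 j * rsubmx w 0 j)
              * (lsubmx v 0 j + rsubmx q 0 j * rsubmx v 0 j)
            + intensity B q j * (rsubmx w 0 j * rsubmx v 0 j))
  - 2^-1 * ((lsubmx v *m Om *m (lsubmx w)^T) 0 0
            + (lsubmx w *m Om *m (lsubmx v)^T) 0 0)
  - \sum_j Om j j * (rsubmx w 0 j * rsubmx v 0 j)
  - \sum_j (rsubmx q 0 j ^+ 2)^-1 * (rsubmx w 0 j * rsubmx v 0 j).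

Definition grad_B B U q : R :=
  \sum_j (Y j)%:R * (x *m U) 0 j - \sum_j intensity B q j * (x *m U) 0 j.

Definition hess_Bpsi B v U q : R :=
  - \sum_j intensity B q j * (x *m U) 0 j
           * (lsubmx v 0 j + rsubmx q 0 j * rsubmx v 0 j).

Ltac derive_tac := repeat first
  [ apply: is_derive_const | apply: is_derive_add | apply: is_derive_sub
  | apply: is_derive_opp | apply: is_derive_bigsum => ? | apply: is_derive_expRf
  | apply: is_derive_lnf | apply: is_derive_exprn | apply: is_derive_mul
  | apply: is_derive_inv | apply: is_derive_lsub_coord | apply: is_derive_rsub_coord
  | apply: is_derive_mulmx_coord | apply: is_derive_quad_form
  | apply: is_derive_bilin_r | apply: is_derive_bilin_l ].

Lemma is_derive_ELBOpsi B q v : (forall j, 0 < rsubmx q 0 j) ->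
  is_derive q v (ELBOpsi Y x o Om B) (grad_psi B v q).
Proof.
move=> q_gt0; rewrite (funext (ELBOpsiE B)) /intensity; apply: is_derive_eq.
  by derive_tac; apply: q_gt0.
rewrite /grad_psi /= !(mulr0, addr0, add0r).
congr (_ - _ - _ - _ + _).
- by apply: eq_bigr => i _; ring.
- by apply: eq_bigr => i _; rewrite /intensity; field.
- by rewrite mulr_sumr; apply: eq_bigr => i _; field.
Qed.

Lemma is_derive_grad_psi B q v w : (forall j, 0 < rsubmx q 0 j) ->
  is_derive q w (grad_psi B v) (hess_psi B v w q).
Proof.
move=> q_gt0; rewrite /grad_psi /intensity; apply: is_derive_eq.
  by derive_tac; rewrite gt_eqF ?q_gt0.
rewrite /hess_psi /intensity /= !(mulr0, addr0, add0r).
congr (- _ - _ - _ + _).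
- by apply: eq_bigr => i _; field.
- by apply: eq_bigr => i _; ring.
- rewrite -sumrN; apply: eq_bigr => i _.
  by have := q_gt0 i; move: (rsubmx q 0 i) => r r_gt0; field; rewrite gt_eqF.
Qed.

Lemma is_derive_grad_psi_B B U q v :
  is_derive B U (fun B' => grad_psi B' v q) (hess_Bpsi B v U q).
Proof.
rewrite /grad_psi /intensity; apply: is_derive_eq; first by derive_tac.
rewrite /hess_Bpsi /intensity /= !(mulr0, addr0, add0r).
by congr (- _); apply: eq_bigr => i _; ring.
Qed.

Lemma is_derive_ELBOpsi_B B U q :
  is_derive B U (fun B' => ELBOpsi Y x o Om B' q) (grad_B B U q).
Proof.
rewrite (funext (ELBOpsiE ^~ q)) /intensity; apply: is_derive_eq; first by derive_tac.
rewrite /grad_B /intensity /= ?(mulr0, addr0, add0r).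
by congr (_ - _); apply: eq_bigr => i _; ring.
Qed.

Lemma is_derive_grad_B B U q v :
  is_derive q v (grad_B B U) (hess_Bpsi B v U q).
Proof.
rewrite /grad_B /intensity; apply: is_derive_eq; first by derive_tac.
rewrite /hess_Bpsi /intensity /= !(mulr0, addr0, add0r).
by congr (- _); apply: eq_bigr => i _; field.
Qed.

End ELBODerivatives.

Lemma mulmx1_invmx (R : comUnitRingType) n (A B : 'M[R]_n) :
  A *m B = 1%:M -> invmx A = B.
Proof.
move=> AB1; have [A_unit _] := mulmx1_unit AB1.
by rewrite -[LHS]mulmx1 -AB1 mulmxA mulVmx // mul1mx.
Qed.

Lemma invmxM (R : comUnitRingType) n (A B : 'M[R]_n) :
  A \in unitmx -> B \in unitmx -> invmx (A *m B) = invmx B *m invmx A.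
Proof.
move=> A_unit B_unit; apply: mulmx1_invmx.
by rewrite mulmxA -(mulmxA A) mulmxV // mulmx1 mulmxV.
Qed.

Lemma invmxN (R : comUnitRingType) n (A : 'M[R]_n) :
  A \in unitmx -> invmx (- A) = - invmx A.
Proof. by move=> A_unit; apply: mulmx1_invmx; rewrite mulNmx mulmxN opprK mulmxV. Qed.

Section DiagonalMatrices.
Variables (R : fieldType) (p : nat).
Implicit Types f g : 'I_p -> R.

Definition diagf f : 'M[R]_p := diag_mx (\row_j f j).

Lemma diagfM f g : diagf f *m diagf g = diagf (fun j => f j * g j).
Proof.
by rewrite /diagf mulmx_diag; congr diag_mx; apply/matrixP => i j; rewrite !mxE.
Qed.

Lemma diagfD f g : diagf f + diagf g = diagf (fun j => f j + g j).
Proof.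
by apply/matrixP => i j; rewrite !mxE; case: eqP => _; rewrite ?mulr1n ?mulr0n ?addr0.
Qed.

Lemma diagfN f : - diagf f = diagf (fun j => - f j).
Proof.
by apply/matrixP => i j; rewrite !mxE; case: eqP => _; rewrite ?mulr1n ?mulr0n ?oppr0.
Qed.

Lemma diagfB f g : diagf f - diagf g = diagf (fun j => f j - g j).
Proof. by rewrite diagfN diagfD. Qed.

Lemma diagf1 : 1%:M = diagf (fun _ => 1).
Proof. by apply/matrixP => i j; rewrite !mxE. Qed.

Lemma eq_diagf f g : f =1 g -> diagf f = diagf g.
Proof. by move=> fg; rewrite /diagf; congr diag_mx; apply/matrixP => i j; rewrite !mxE fg. Qed.

Lemma tr_diagf f : (diagf f)^T = diagf f.
Proof. exact: tr_diag_mx. Qed.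

Lemma invmx_diagf f : (forall j, f j != 0) -> invmx (diagf f) = diagf (fun j => (f j)^-1).
Proof.
move=> f_neq0; apply: mulmx1_invmx.
by rewrite diagfM diagf1; apply: eq_diagf => j; rewrite mulfV.
Qed.

Lemma quad_diagf (u z : 'rV[R]_p) f :
  (u *m diagf f *m z^T) 0 0 = \sum_j u 0 j * f j * z 0 j.
Proof. by rewrite /diagf mul_mx_diag !mxE; apply: eq_bigr => j _; rewrite !mxE. Qed.

End DiagonalMatrices.

Section DiagonalNotations.
Variables (R : realType) (p : nat) (v : 'rV[R]_p).

Lemma DgE : Dg v = diagf (fun j => v 0 j).
Proof. by rewrite /Dg /diagf; congr diag_mx; apply/matrixP => i j; rewrite !mxE ord1. Qed.

Lemma DsqrtE : Dsqrt v = diagf (fun j => Num.sqrt (v 0 j)).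
Proof. by rewrite /Dsqrt /diagf; congr diag_mx; apply/matrixP => i j; rewrite !mxE ord1. Qed.

Lemma DinvsqrtE : Dinvsqrt v = diagf (fun j => (Num.sqrt (v 0 j))^-1).
Proof.
by rewrite /Dinvsqrt /diagf; congr diag_mx; apply/matrixP => i j; rewrite !mxE ord1.
Qed.

Lemma OmDE (Om : 'M[R]_p) : OmD Om = diagf (fun j => Om j j).
Proof. by []. Qed.

End DiagonalNotations.

Section SchurComplement.
Variables (R : realType) (p : nat) (a s : 'rV[R]_p) (Om : 'M[R]_p).
Hypothesis a_gt0 : forall j, 0 < a 0 j.
Hypothesis s_gt0 : forall j, 0 < s 0 j.
Hypothesis Om_pd : forall v : 'rV[R]_p, v != 0 -> 0 < (v *m Om *m v^T) 0 0.

Lemma Om_diag_gt0 j : 0 < Om j j.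
Proof.
have := Om_pd (v := delta_mx 0 j).
rewrite -rowE trmx_delta -colE !mxE; apply.
by apply/eqP => /matrixP /(_ 0 j); rewrite !mxE !eqxx /= => /eqP; rewrite oner_eq0.
Qed.

Definition hdiag j := a 0 j + a 0 j * s 0 j ^+ 2 + Om j j + (s 0 j ^+ 2)^-1.
Definition gdiag j := s 0 j ^+ 2 * a 0 j / hdiag j.
Definition cdiag j := a 0 j * (1 - gdiag j).

Lemma hdiag_gt0 j : 0 < hdiag j.
Proof.
have := a_gt0 j; have := s_gt0 j; have := Om_diag_gt0 j; rewrite /hdiag => *.
by rewrite !addr_gt0 ?mulr_gt0 ?exprn_gt0 ?invr_gt0 ?exprn_gt0.
Qed.

Lemma hdiag_neq0 j : hdiag j != 0.
Proof. by rewrite gt_eqF ?hdiag_gt0. Qed.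

Lemma cdiag_gt0 j : 0 < cdiag j.
Proof.
rewrite /cdiag /gdiag mulr_gt0 ?a_gt0 // subr_gt0 ltr_pdivrMr ?hdiag_gt0 // mul1r.
have := a_gt0 j; have := s_gt0 j; have := Om_diag_gt0 j => *.
have : 0 < (s 0 j ^+ 2)^-1 by rewrite invr_gt0 exprn_gt0.
by rewrite /hdiag; nra.
Qed.

Lemma unitmx_diagf_addOm (c : 'I_p -> R) : (forall j, 0 < c j) ->
  diagf c + Om \in unitmx.
Proof.
move=> c_gt0; rewrite -row_free_unit; apply: inj_row_free => v v_ker.
apply/eqP; apply/negPn/negP => /Om_pd vOmv_gt0.
have : ((v *m (diagf c + Om)) *m v^T) 0 0 = 0 by rewrite v_ker mul0mx mxE.
rewrite mulmxDr mulmxDl mxE.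
have : 0 <= ((v *m diagf c) *m v^T) 0 0.
  rewrite quad_diagf; apply: sumr_ge0 => i _.
  by rewrite mulrAC -expr2 mulr_ge0 ?sqr_ge0 // ltW.
by move: vOmv_gt0; set u := (_ *m v^T) 0 0; set w := (_ *m v^T) 0 0; lra.
Qed.

Definition Das := diagf (fun j => a 0 j * s 0 j).
Definition Mblk := block_mx (diagf (fun j => a 0 j) + Om) Das Das (diagf hdiag).
Definition Wblk := row_mx (diagf (fun j => a 0 j)) Das.
Definition Schur := diagf cdiag + Om.

Lemma Schur_unit : Schur \in unitmx.
Proof. exact: unitmx_diagf_addOm cdiag_gt0. Qed.

Lemma diag_a_split : diagf (fun j => a 0 j) = diagf cdiag + diagf (fun j => a 0 j * gdiag j).
Proof. by rewrite diagfD; apply: eq_diagf => j; rewrite /cdiag; ring. Qed.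

Lemma diag_a_addOm : diagf (fun j => a 0 j) + Om = Schur + diagf (fun j => a 0 j * gdiag j).
Proof. by rewrite diag_a_split /Schur addrAC. Qed.

Let Dsh := diagf (fun j => s 0 j * a 0 j / hdiag j).

Lemma Das_Dsh : Das *m Dsh = diagf (fun j => a 0 j * gdiag j).
Proof. by rewrite /Das diagfM; apply: eq_diagf => j; rewrite /gdiag; ring. Qed.

Lemma hdiag_Dsh : diagf hdiag *m Dsh = Das.
Proof.
rewrite /Das diagfM; apply: eq_diagf => j; have := hdiag_neq0 j.
by move: (hdiag j) => h h_neq0; field.
Qed.

Definition Xmu := invmx Schur *m diagf cdiag.
Definition Xs := Dsh *m (1%:M - Xmu).

Lemma Mblk_solve : Mblk *m col_mx Xmu Xs = Wblk^T.
Proof.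
rewrite /Mblk /Wblk mul_block_col tr_row_mx !tr_diagf; congr col_mx.
  rewrite diag_a_addOm /Xs mulmxA Das_Dsh mulmxDl {1}/Xmu mulKVmx ?Schur_unit //.
  by rewrite mulmxBr mulmx1 [_ - _ *m Xmu]addrC addrA addrK diag_a_split.
by rewrite /Xs mulmxA hdiag_Dsh mulmxBr mulmx1 addrC subrK.
Qed.

Lemma Mblk_unit : Mblk \in unitmx.
Proof.
rewrite -row_free_unit; apply: inj_row_free => v.
rewrite -[v]hsubmxK /Mblk mul_row_block => /eqP.
rewrite row_mx_eq0 => /andP[/eqP ker_mu /eqP ker_s].
set u := lsubmx v in ker_mu ker_s *; set w := rsubmx v in ker_mu ker_s *.
have w_u : w = - (u *m Dsh).
  have := congr1 (mulmx^~ (diagf (fun j => (hdiag j)^-1))) ker_s.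
  rewrite mul0mx mulmxDl -!mulmxA [diagf hdiag *m _]diagfM.
  rewrite (@eq_diagf _ _ (fun j => hdiag j / hdiag j) (fun _ => 1)); last first.
    by move=> j; rewrite mulfV ?hdiag_neq0.
  rewrite -diagf1 mulmx1 /Das diagfM => /eqP; rewrite addr_eq0 => /eqP uDsh.
  by rewrite -[w]opprK -uDsh; congr (- (_ *m _)); apply: eq_diagf => j; ring.
have u0 : u = 0.
  have DshC : Dsh *m Das = Das *m Dsh by rewrite /Das !diagfM; apply: eq_diagf => j; ring.
  move: ker_mu; rewrite w_u mulNmx -mulmxA DshC Das_Dsh diag_a_addOm mulmxDr addrK.
  by move=> /(congr1 (mulmx^~ (invmx Schur))); rewrite mulmxK ?Schur_unit // mul0mx.
by rewrite w_u u0 mul0mx oppr0 row_mx0.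
Qed.

Lemma Wblk_quad : Wblk *m invmx Mblk *m Wblk^T
  = diagf (fun j => a 0 j * gdiag j) + diagf cdiag *m invmx Schur *m diagf cdiag.
Proof.
rewrite -mulmxA -Mblk_solve mulKmx ?Mblk_unit // /Wblk mul_row_col /Xs mulmxA Das_Dsh.
rewrite diag_a_split mulmxDl mulmxBr mulmx1 [_ - _ *m Xmu]addrC addrA addrK addrC.
by rewrite /Xmu mulmxA.
Qed.

Lemma sqrt_a_sqr j : Num.sqrt (a 0 j) ^+ 2 = a 0 j.
Proof. by rewrite sqr_sqrtr // ltW. Qed.

Lemma sqrt_a_neq0 j : Num.sqrt (a 0 j) != 0.
Proof. by rewrite gt_eqF // sqrtr_gt0. Qed.

Lemma Gmx_diagf : Gmx a s Om = diagf gdiag.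
Proof.
have den_gt0 j : 0 < 1 + s 0 j * s 0 j * (a 0 j + a 0 j * (s 0 j * s 0 j) + Om j j).
  have := a_gt0 j; have := s_gt0 j; have := Om_diag_gt0 j => *.
  by rewrite addr_gt0 // !mulr_gt0 // !addr_gt0 // !mulr_gt0.
rewrite /Gmx /Lambda !DgE OmDE diagf1 !(diagfM, diagfD) invmx_diagf; last first.
  by move=> j; rewrite gt_eqF ?den_gt0.
rewrite !diagfM; apply: eq_diagf => j /=; rewrite /gdiag.
move: (den_gt0 j) (hdiag_neq0 j); rewrite /hdiag.
move: (s 0 j) (a 0 j) (Om j j) (gt_eqF (s_gt0 j)) => sj aj oj sj_neq0 den_gt0' h_neq0.
field; rewrite sj_neq0 /=.
by rewrite (_ : _ * sj ^+ 2 + 1 = 1 + sj * sj * (aj + aj * (sj * sj) + oj)) ?gt_eqF //; ring.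
Qed.

Let Dsa := diagf (fun j => Num.sqrt (a 0 j)).
Let Dsai := diagf (fun j => (Num.sqrt (a 0 j))^-1).

Lemma Cmx_Schur : Cmx a s Om = Dsa *m invmx Schur *m Dsa.
Proof.
rewrite /Cmx -/(Gmx a s Om) Gmx_diagf DinvsqrtE -/Dsai.
have -> : 1%:M + Dsai *m Om *m Dsai - diagf gdiag = Dsai *m Schur *m Dsai.
  rewrite /Schur mulmxDr mulmxDl addrAC diagf1 diagfB /Dsai !diagfM; congr (_ + _).
  apply: eq_diagf => j /=; rewrite /cdiag.
  have := sqrt_a_sqr j; have := sqrt_a_neq0 j.
  by set r := Num.sqrt _ => r_neq0 <-; field.
have Dsai_Dsa : Dsai *m Dsa = 1%:M.
  by rewrite /Dsai /Dsa diagfM diagf1; apply: eq_diagf => j; rewrite mulVf ?sqrt_a_neq0.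
have [Dsai_unit _] := mulmx1_unit Dsai_Dsa.
by rewrite !invmxM ?unitmx_mul ?Dsai_unit ?Schur_unit // (mulmx1_invmx Dsai_Dsa) mulmxA.
Qed.

Lemma Emx_Schur : Dsqrt a *m Emx a s Om *m Dsqrt a
  = diagf (fun j => a 0 j * gdiag j) + diagf cdiag *m invmx Schur *m diagf cdiag.
Proof.
have sandwich (f : 'I_p -> R) : Dsa *m diagf f *m Dsa = diagf (fun j => a 0 j * f j).
  by rewrite /Dsa !diagfM; apply: eq_diagf => j; rewrite mulrAC -expr2 sqrt_a_sqr.
rewrite /Emx Gmx_diagf Cmx_Schur DsqrtE -/Dsa.
rewrite [Dsa *m (_ + _)]mulmxDr [(_ + _) *m Dsa]mulmxDl sandwich; congr (_ + _).
rewrite (_ : Dsa *m (_ *m (Dsa *m _ *m Dsa) *m _) *m Dsa =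
  (Dsa *m (1%:M - diagf gdiag) *m Dsa) *m invmx Schur *m
  (Dsa *m (1%:M - diagf gdiag) *m Dsa)); last by rewrite !mulmxA.
by rewrite diagf1 diagfB sandwich.
Qed.

End SchurComplement.

Lemma sum_mul_delta (R : ringType) n (F : 'I_n -> R) j0 :
  \sum_j F j * (j == j0)%:R = F j0.
Proof. by rewrite (bigD1 j0) //= eqxx mulr1 big1 ?addr0 // => j /negPf ->; rewrite mulr0. Qed.

Lemma mx11_addE (R : ringType) (A B : 'M[R]_1) : (A + B) 0 0 = A 0 0 + B 0 0.
Proof. by rewrite mxE. Qed.

Section Hessians.
Variables (R : realType) (p m : nat) (Y : 'I_p -> nat) (x : 'rV[R]_m)
  (o : 'rV[R]_p) (B : 'M[R]_(m, p)) (Om : 'M[R]_p) (mu s : 'rV[R]_p).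
Hypothesis Om_sym : Om^T = Om.
Hypothesis s_gt0 : forall j, 0 < s 0 j.

Let psi := row_mx mu s.
Let a := atil x o B mu s.

Lemma intensity_psi j : intensity x o B psi j = a 0 j.
Proof. by rewrite /intensity /a /atil /psi mxE row_mxKl row_mxKr. Qed.

Lemma Om_bilin_sym (u z : 'rV[R]_p) : (u *m Om *m z^T) 0 0 = (z *m Om *m u^T) 0 0.
Proof.
have -> : z *m Om *m u^T = (u *m Om *m z^T)^T by rewrite !trmx_mul trmxK Om_sym mulmxA.
by rewrite [RHS]mxE.
Qed.

Lemma hess_psi_Mblk (v w : 'rV[R]_(p + p)) :
  hess_psi x o Om B v w psi = - (w *m Mblk a s Om *m v^T) 0 0.
Proof.
set vl := lsubmx v; set vr := rsubmx v; set wl := lsubmx w; set wr := rsubmx w.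
have -> : w *m Mblk a s Om *m v^T =
    wl *m (diagf (fun j => a 0 j) + Om) *m vl^T + wr *m Das a s *m vl^T
    + (wl *m Das a s *m vr^T + wr *m diagf (hdiag a s Om) *m vr^T).
  rewrite -[w]hsubmxK -[v]hsubmxK /Mblk mul_row_block tr_row_mx mul_row_col !mulmxDl.
  by rewrite -/vl -/vr -/wl -/wr ?mulmxA.
rewrite mulmxDr mulmxDl !mx11_addE /Das !quad_diagf /hess_psi Om_bilin_sym.
under eq_bigr do rewrite intensity_psi.
rewrite /psi row_mxKr -/vl -/vr -/wl -/wr.
set t := (wl *m Om *m vl^T) 0 0.
transitivity (- t - \sum_j (a 0 j * (wl 0 j + s 0 j * wr 0 j) * (vl 0 j + s 0 j * vr 0 j)
   + a 0 j * (wr 0 j * vr 0 j) + Om j j * (wr 0 j * vr 0 j)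
   + s 0 j ^- 2 * (wr 0 j * vr 0 j))).
  by rewrite !big_split /=; field.
transitivity (- t - \sum_j (wl 0 j * a 0 j * vl 0 j + wr 0 j * (a 0 j * s 0 j) * vl 0 j
   + wl 0 j * (a 0 j * s 0 j) * vr 0 j + wr 0 j * hdiag a s Om j * vr 0 j)).
  congr (_ - _); apply: eq_bigr => j _; rewrite /hdiag.
  by have := s_gt0 j; move: (s 0 j) => sj sj_gt0; field; rewrite gt_eqF.
by rewrite !big_split /=; ring.
Qed.

Lemma hess_Bpsi_Wblk (v : 'rV[R]_(p + p)) U :
  hess_Bpsi x o B v U psi = - (x *m U *m Wblk a s *m v^T) 0 0.
Proof.
rewrite -[v]hsubmxK /Wblk tr_row_mx mul_mx_row mul_row_col mx11_addE /Das !quad_diagf.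
rewrite /hess_Bpsi /psi row_mxKr -big_split /=; congr (- _); apply: eq_bigr => j _.
by rewrite intensity_psi ?row_mxKl ?row_mxKr; ring.
Qed.

Lemma near_psi_s_gt0 : \forall q \near psi, forall j, 0 < rsubmx q 0 j.
Proof.
suff near_j j : \forall q \near psi, 0 < rsubmx q 0 j by exact: filter_forall near_j.
have psi_j : 0 < psi 0 (rshift p j) by rewrite /psi row_mxEr.
have /cvgr_gt /(_ 0 psi_j) := @coord_continuous R 1 (p + p) 0 (rshift p j) psi.
by apply: filterS => q; rewrite mxE.
Qed.

Lemma epsi_bilin (M : 'M[R]_(p + p)) i j : (epsi R i *m M *m (epsi R j)^T) 0 0 = M i j.
Proof. by rewrite /epsi -rowE trmx_delta -colE !mxE. Qed.

Lemma HpsipsiE : Hpsipsi Y x o Om B psi = - Mblk a s Om.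
Proof.
apply/matrixP => i j; rewrite mxE [RHS]mxE.
have psi_s_gt0 j' : 0 < rsubmx psi 0 j' by rewrite /psi row_mxKr.
rewrite (@near_eq_derive _ _ _ _ (grad_psi Y x o Om B (epsi R j))); last first.
  apply: filterS near_psi_s_gt0 => q q_gt0.
  by have [_ ->] := is_derive_ELBOpsi Y x o Om B (epsi R j) q_gt0.
have [_ ->] := is_derive_grad_psi Y x o Om B (epsi R j) (epsi R i) psi_s_gt0.
by rewrite hess_psi_Mblk epsi_bilin.
Qed.

Definition xeB : 'M[R]_(p * m, p) := \matrix_(i, j) (x *m eB R i) 0 j.

Lemma xeB_Wblk_entry i b :
  (x *m eB R i *m Wblk a s *m (epsi R b)^T) 0 0 = (xeB *m Wblk a s) i b.
Proof.
rewrite /epsi trmx_delta -colE !mxE.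
by apply: eq_bigr => j _; rewrite !mxE.
Qed.

Lemma HBpsiE : HBpsi Y x o Om B psi = - (xeB *m Wblk a s).
Proof.
apply/matrixP => i b; rewrite mxE [RHS]mxE.
have psi_s_gt0 j : 0 < rsubmx psi 0 j by rewrite /psi row_mxKr.
rewrite (_ : (fun B' => _) = fun B' => grad_psi Y x o Om B' (epsi R b) psi); last first.
  by apply: funext => B'; have [_ ->] := is_derive_ELBOpsi Y x o Om B' (epsi R b) psi_s_gt0.
have [_ ->] := is_derive_grad_psi_B Y x o Om B (eB R i) psi (epsi R b).
by rewrite hess_Bpsi_Wblk xeB_Wblk_entry.
Qed.

Lemma HpsiBE : HpsiB Y x o Om B psi = - (xeB *m Wblk a s)^T.
Proof.
apply/matrixP => b i; rewrite mxE [RHS]mxE [in RHS]mxE.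
rewrite (_ : (fun q => _) = grad_B Y x o B (eB R i)); last first.
  by apply: funext => q; have [_ ->] := is_derive_ELBOpsi_B Y x o Om B (eB R i) q.
have [_ ->] := is_derive_grad_B Y x o B (eB R i) psi (epsi R b).
by rewrite hess_Bpsi_Wblk xeB_Wblk_entry.
Qed.

Lemma xeB_entry j0 k j : xeB (mxtens_index (j0, k)) j = x 0 k * (j == j0)%:R.
Proof.
rewrite mxE /eB mxtens_indexK /= mxE (bigD1 k) //= mxE eqxx /= big1 ?addr0 //.
by move=> r /negPf rk; rewrite mxE rk /= mulr0.
Qed.

Lemma xeB_sandwich (Z : 'M[R]_p) : xeB *m Z *m xeB^T = Z *t (x^T *m x).
Proof.
apply/matrixP => i1 i2.
case: (mxtens_indexP i1) => j1 k1; case: (mxtens_indexP i2) => j2 k2.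
rewrite tensmxE mxE [(x^T *m x) _ _]mxE big_ord1 !mxE.
rewrite (eq_bigr (fun l => x 0 k1 * Z j1 l * x 0 k2 * (l == j2)%:R)); last first.
  move=> l _; rewrite [xeB^T _ _]mxE xeB_entry mxE.
  rewrite (eq_bigr (fun j => x 0 k1 * Z j l * (j == j1)%:R)) ?sum_mul_delta; first by ring.
  by move=> j _; rewrite xeB_entry; ring.
by rewrite sum_mul_delta; ring.
Qed.

End Hessians.

Unset Implicit Arguments.

Theorem proposition9 (R : realType) (p m : nat)
  (Y : 'I_p -> nat) (x : 'rV[R]_m) (o : 'rV[R]_p)
  (B : 'M[R]_(m, p)) (Om : 'M[R]_p)
  (Om_sym : Om^T = Om)
  (Om_pd : forall v : 'rV[R]_p, v != 0 -> 0 < (v *m Om *m v^T) 0 0)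
  (mu s : 'rV[R]_p) (s_pos : forall j, 0 < s 0 j) :
  let psi := row_mx mu s in
  let a := atil x o B mu s in
  HBpsi Y x o Om B psi *m invmx (Hpsipsi Y x o Om B psi) *m HpsiB Y x o Om B psi
  = - ((Dsqrt a *m Emx a s Om *m Dsqrt a) *t (x^T *m x)).
Proof.
move=> psi a.
have a_gt0 j : 0 < a 0 j by rewrite mxE expR_gt0.
rewrite HBpsiE // HpsiBE // HpsipsiE // invmxN ?Mblk_unit //.
rewrite !(mulNmx, mulmxN, opprK) trmx_mul; congr (- _).
rewrite -xeB_sandwich (Emx_Schur a_gt0 s_pos Om_pd) -(Wblk_quad a_gt0 s_pos Om_pd).
by rewrite !mulmxA.
Qed.
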